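(* Every nonempty, acyclic and connected extended representation graph for $E$ that does not contain a source is isomorphic to $(F_x,\phi_x)$ for some $x\in X^\infty$.
   Context: $E=(E^0,E^1,s,r)$ is a row-finite directed graph; for each vertex $v$ emitting an edge a fixed edge $e^v\in s^{-1}(v)$ is called special, others nonspecial. The double graph $E_d$ has vertices $E^0$ and edges $e$ (real) and $e^*$ (ghost) for $e\in E^1$, with $s_d(e)=s(e),r_d(e)=r(e),s_d(e^* )=r(e),r_d(e^* )=s(e)$. For a path $p=e_1\dots e_n$ set $p^*=e_n^*\dots e_1^*$. The set $X$ of (finite) basis paths consists of the paths in $E_d$: vertices; $p,p^*$ for paths $p$ of length $\ge1$ in $E$; $pq^*$ with $p=e_1\dots e_k,q=f_1\dots f_n$ of length $\ge1$ in $E$, $r(p)=r(q)$, and $e_k\ne f_n$ or $e_k=f_n$ nonspecial. $X^\infty$ is the set of left-infinite words $x=\dots x_3x_2x_1$ of edges of $E_d$ such that each $x_n\dots x_1$ is a basis path. An extended representation graph for $E$ is a pair $(F,\phi)$, $F$ a directed graph, $\phi:F\to E_d$ a graph homomorphism, such that for every $w\in F^0$: (i) $w$ is a source or receives exactly one edge $f_w$; (ii) if $w$ is a source or $\phi(f_w)$ is a nonspecial real edge, $\phi$ maps $s^{-1}(w)$ bijectively onto $s_d^{-1}(\phi(w))$; (iii) if $\phi(f_w)$ is a special real edge, onto $s_d^{-1}(\phi(w))\setminus\{\phi(f_w)^*\}$; (iv) if $\phi(f_w)$ is a ghost edge, onto the ghost edges in $s_d^{-1}(\phi(w))$. An isomorphism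 $(F,\phi)\to(G,\psi)$ is a graph isomorphism $\alpha$ with $\psi\circ\alpha=\phi$. $F$ is connected if any two vertices are joined by a path when edge directions are ignored; acyclic if it has no cycle; nonempty if $F^0\neq\emptyset$. $(F_x,\phi_x)$ for $x=\dots x_2x_1\in X^\infty$: for $i\in\mathbb N$, $X_i$ = basis paths $y=y_1\dots y_n$, $n\ge1$, with $x_iy_1$ a basis path and $y_1\ne x_{i-1}$ if $i\ge2$. Vertices $w_i$ ($i\in\mathbb N$), $w_{i,y}$ ($y\in X_i$), all distinct; edges $f_i$ from $w_{i+1}$ to $w_i$, and $f_{i,y}$ to $w_{i,y}$ from $w_i$ if $|y|=1$, from $w_{i,y_1\dots y_{n-1}}$ if $n\ge2$; $\phi_x(w_i)=r_d(x_i)$, $\phi_x(w_{i,y})=r_d(y)$, $\phi_x(f_i)=x_i$, $\phi_x(f_{i,y})=$ last edge of $y$. *)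

From Stdlib Require Import Relations List.
From mathcomp Require Import all_boot.
Set Implicit Arguments. Unset Strict Implicit. Unset Printing Implicit Defensive.

(* A row-finite directed graph E = (E^0, E^1, s, r) together with the choice of
   a special edge e^v in s^{-1}(v) for every vertex v emitting an edge. *)
Record rfgraph := RFGraph {
  vert : Type;
  edge : Type;
  src : edge -> vert;
  rng : edge -> vert;
  row_finite : forall v, exists l : seq edge, forall e, src e = v -> Stdlib.Lists.List.In e l;
  spc : vert -> option edge;
  spc_src : forall v e, spc v = Some e -> src e = v;
  spc_emit : forall e, spc (src e) <> None }.

Definition special (E : rfgraph) (e : edge E) : Prop := spc (src e) = Some e.

Inductive dedge (E : rfgraph) := Real of edge E | Ghost of edge E.
Arguments Real {E}. Arguments Ghost {E}.

Definition sd (E : rfgraph) (d : dedge E) : vert E :=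
  match d with Real e => src e | Ghost e => rng e end.
Definition rd (E : rfgraph) (d : dedge E) : vert E :=
  match d with Real e => rng e | Ghost e => src e end.

Fixpoint dpath (E : rfgraph) (w : seq (dedge E)) : Prop :=
  match w with
  | a :: ((b :: _) as t) => rd a = sd b /\ dpath t
  | _ => True
  end.

(* Basis paths of length >= 1: p, q^*, or p q^* with the special-edge condition.
   p = e_1..e_k is encoded as map Real p, q = f_1..f_n gives q^* = rev (map Ghost q). *)
Definition basis_word (E : rfgraph) (w : seq (dedge E)) : Prop :=
  w <> [::] /\ dpath w /\
  exists p q : seq (edge E),
    w = map Real p ++ rev (map Ghost q) /\
    forall p' e q' f, p = rcons p' e -> q = rcons q' f ->
      e <> f \/ (e = f /\ ~ special e).

(* x : nat -> dedge E encodes the left-infinite word ... x_3 x_2 x_1 with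
   x_{k+1} = x k. *)
Definition in_Xinf (E : rfgraph) (x : nat -> dedge E) : Prop :=
  forall n, 0 < n -> basis_word (rev (mkseq x n)).

(* X_i for i = k+1. *)
Definition Xi (E : rfgraph) (x : nat -> dedge E) (k : nat) (y : seq (dedge E)) : Prop :=
  basis_word y /\
  exists y1 ys, y = y1 :: ys /\ basis_word [:: x k; y1] /\ (0 < k -> y1 <> x k.-1).

Record graph := Graph { gV : Type; gE : Type; gs : gE -> gV; gr : gE -> gV }.

(* Vertices of F_x: (k, [::]) is w_{k+1}, (k, y) with y in X_{k+1} is w_{k+1,y}.
   Edges are indexed by the same set: (k, [::]) is f_{k+1}, (k, y) is f_{k+1,y}
   (the edge whose range is the vertex with the same index). *)
Definition FVpred (E : rfgraph) (x : nat -> dedge E) (p : nat * seq (dedge E)) : Prop :=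
  p.2 = [::] \/ Xi x p.1 p.2.

Definition FV (E : rfgraph) (x : nat -> dedge E) := {p : nat * seq (dedge E) | FVpred x p}.

Definition src_idx (E : rfgraph) (p : nat * seq (dedge E)) : nat * seq (dedge E) :=
  if p.2 is [::] then (p.1.+1, [::]) else (p.1, take (size p.2).-1 p.2).

Lemma dpath_rcons (E : rfgraph) (z : seq (dedge E)) a : dpath (rcons z a) -> dpath z.
Proof.
elim: z => [|b z IH] //=.
case: z IH => [|c z] IH //=.
by case=> H1 H2; split => //; apply: IH.
Qed.

Lemma basis_rcons (E : rfgraph) (z : seq (dedge E)) a :
  z <> [::] -> basis_word (rcons z a) -> basis_word z.
Proof.
move=> nz [_ [Hp [p [q [Hw Hc]]]]].
split => //; split; first exact: dpath_rcons Hp.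
clear Hp.
case: q Hw Hc => [|f q'] Hw Hc.
  case/lastP: p Hw Hc => [|p' e] Hw Hc.
    by rewrite /= in Hw; case: z nz Hw.
  exists p', [::]; split; last by move=> ? ? q'' ? _ Hq; case: q'' Hq.
  rewrite /= cats0 map_rcons in Hw; rewrite cats0.
  by move/rcons_inj: Hw => [].
exists p, q'; split.
  move: Hw; rewrite map_cons rev_cons -rcons_cat => /rcons_inj [] //.
move=> p'' e q'' f' Hp' Hq'; apply: (Hc p'' e (f :: q'') f') => //.
by rewrite Hq'.
Qed.

Lemma FV_src_ok (E : rfgraph) (x : nat -> dedge E) p : FVpred x p -> FVpred x (src_idx p).
Proof.
case: p => k y; rewrite /FVpred /src_idx /=.
case: y => [|a t] /=; first by left.
case => // -[Hb [y1 [ys [Hy [H1 H2]]]]].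
case: Hy => Ha Ht; subst y1 ys.
case/lastP: t Hb => [|t b] Hb; first by left.
right; rewrite size_rcons -rcons_cons -cats1 take_size_cat //.
split; first by apply: (basis_rcons (a := b)) => //; rewrite cats1 rcons_cons.
by exists a, t.
Qed.

Definition FE_src (E : rfgraph) (x : nat -> dedge E) (e : FV x) : FV x :=
  exist _ (src_idx (sval e)) (FV_src_ok (svalP e)).

Definition Fgraph (E : rfgraph) (x : nat -> dedge E) : graph :=
  @Graph (FV x) (FV x) (@FE_src E x) (fun e => e).

Definition phixE (E : rfgraph) (x : nat -> dedge E) (e : FV x) : dedge E :=
  match (sval e).2 with [::] => x (sval e).1 | a :: t => last a t end.
Definition phixV (E : rfgraph) (x : nat -> dedge E) (v : FV x) : vert E :=
  rd (phixE v).

Definition onto_bij (E : rfgraph) (G : graph) (phE : gE G -> dedge E)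
  (w : gV G) (T : dedge E -> Prop) : Prop :=
  (forall f1 f2, gs f1 = w -> gs f2 = w -> phE f1 = phE f2 -> f1 = f2) /\
  (forall f, gs f = w -> T (phE f)) /\
  (forall d, T d -> exists2 f, gs f = w & phE f = d).

Definition is_source (G : graph) (w : gV G) : Prop := forall f, gr f <> w.

Definition is_ext_rep (E : rfgraph) (G : graph)
  (phV : gV G -> vert E) (phE : gE G -> dedge E) : Prop :=
  (forall f, sd (phE f) = phV (gs f) /\ rd (phE f) = phV (gr f)) /\
  forall w : gV G,
    (is_source w /\ onto_bij phE w (fun d => sd d = phV w)) \/
    (exists fw, gr fw = w /\ (forall f, gr f = w -> f = fw) /\
      match phE fw with
      | Real e =>
          (~ special e -> onto_bij phE w (fun d => sd d = phV w)) /\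
          (special e -> onto_bij phE w (fun d => sd d = phV w /\ d <> Ghost e))
      | Ghost _ =>
          onto_bij phE w (fun d => sd d = phV w /\ exists e, d = Ghost e)
      end).

Fixpoint gpath (G : graph) (f : gE G) (fs : seq (gE G)) : Prop :=
  match fs with [::] => True | g :: gs' => gr f = gs g /\ gpath g gs' end.

Definition acyclic (G : graph) : Prop :=
  ~ exists (f : gE G) (fs : seq (gE G)), gpath f fs /\ gr (last f fs) = gs f.

Definition gadj (G : graph) (u v : gV G) : Prop := exists f, gs f = u /\ gr f = v.

Definition connected (G : graph) : Prop :=
  forall u v : gV G, clos_refl_sym_trans (gV G) (@gadj G) u v.

Definition no_source (G : graph) : Prop := forall w : gV G, ~ is_source w.

Definition erg_iso (E : rfgraph) (G1 : graph) (phV1 : gV G1 -> vert E) (phE1 : gE G1 -> dedge E)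
  (G2 : graph) (phV2 : gV G2 -> vert E) (phE2 : gE G2 -> dedge E) : Prop :=
  exists (aV : gV G1 -> gV G2) (aE : gE G1 -> gE G2),
    bijective aV /\ bijective aE /\
    (forall f, gs (aE f) = aV (gs f)) /\ (forall f, gr (aE f) = aV (gr f)) /\
    (forall v, phV2 (aV v) = phV1 v) /\ (forall f, phE2 (aE f) = phE1 f).

From mathcomp Require Import all_boot.
From Stdlib Require Import Classical ClassicalEpsilon ProofIrrelevance Relations.
Set Implicit Arguments. Unset Strict Implicit. Unset Printing Implicit Defensive.

(* A word in E_d is a basis path iff each pair of consecutive letters is
   composable: ranges and sources match, no ghost edge is followed by a real
   one, and no special e is followed by e^*.  In these terms, a source-free
   extended representation graph gives every vertex w exactly one incoming
   edge, and labels the outgoing edges of w bijectively by the letters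
   composable after the label of that incoming edge.
   Following incoming edges backwards from a vertex w0 gives a ray
   w0 <- w1 <- w2 <- ..., injective by acyclicity, whose labels form some
   x in X^oo.  Reading each y in X_i forwards from w_i gives a label- and
   source-preserving map F_x -> G.  It is injective because enough parent steps
   send any two vertices of F_x onto the ray, and a vertex of F_x is determined
   by its parent and the label of its incoming edge; it is surjective by
   connectedness, since its image is closed under parents and children. *)

Section BasisWords.
Variable E : rfgraph.

Definition composable (a b : dedge E) : Prop :=
  rd a = sd b /\
  match a, b with
  | Ghost _, Real _ => False
  | Real e, Ghost f => e <> f \/ ~ special e
  | _, _ => True
  end.

Fixpoint composable_seq (w : seq (dedge E)) : Prop :=
  match w with
  | a :: ((b :: _) as t) => composable a b /\ composable_seq t
  | _ => True
  end.

Lemma composable_Ghost e d :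
  composable (Ghost e) d <-> sd d = src e /\ exists f, d = Ghost f.
Proof.
case: d => f; rewrite /composable /=; split; case=> //.
- by move=> _ [].
- by move=> -> _; eauto.
Qed.

Lemma composable_Real_special e d : special e ->
  composable (Real e) d <-> sd d = rng e /\ d <> Ghost e.
Proof.
move=> spe; case: d => f; rewrite /composable /=; split.
- by case=> ->.
- by case=> ->.
- by case=> -> [nef|] //; split=> // -[ef]; apply: nef.
- by case=> -> neq; split=> //; left=> ef; apply: neq; rewrite ef.
Qed.

Lemma composable_Real_nonspecial e d : ~ special e ->
  composable (Real e) d <-> sd d = rng e.
Proof. by move=> nspe; case: d => f; rewrite /composable /=; split=> [[]|->]; auto. Qed.

Lemma composable_seq_rcons a s d :
  composable_seq (rcons (a :: s) d) <-> composable_seq (a :: s) /\ composable (last a s) d.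
Proof.
elim: s a => [|b s IH] a /=; first by split; [case | case].
by move: (IH b) => /=; tauto.
Qed.

Lemma composable_seq_behead a s : composable_seq (a :: s) -> composable_seq s.
Proof. by case: s => [|b s] //= []. Qed.

Lemma basis_word1 (a : dedge E) : basis_word [:: a].
Proof.
do 2!split=> //; case: a => e.
- by exists [:: e], [::]; split=> // ? ? q' ? _; case: q'.
- by exists [::], [:: e]; split=> // p' ? ? ?; case: p'.
Qed.

Lemma basis_word_consK (a b : dedge E) t :
  basis_word [:: a, b & t] -> composable a b /\ basis_word (b :: t).
Proof.
move=> [_ [[rab dp] [p [q [w_pq last_pq]]]]].
case: p w_pq last_pq => [|e p] w_pq last_pq.
- case/lastP: q w_pq last_pq => [|q f] //; rewrite map_rcons rev_rcons => -[aE w_q] _.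
  case/lastP: q w_q => [|q g] //; rewrite map_rcons rev_rcons => -[bE w_q].
  subst a b; split; first by split.
  do 2!split=> //; exists [::], (rcons q g).
  by rewrite map_rcons rev_rcons w_q; split=> // [[|? ?]].
- move: w_pq => /= [aE w_pq]; subst a; split.
    split=> //; case: b w_pq {rab dp} => f w_pq //.
    case: p w_pq last_pq => [|? ?] //; case/lastP: q => [|q f'] //.
    rewrite /= map_rcons rev_rcons => -[ff' _] last_pq; subst f'.
    by have [|[_ ?]] := last_pq [::] e q f erefl erefl; [left | right].
  do 2!split=> //; exists p, q; split=> // p' e' q' f' pE qE.
  by apply: (last_pq (e :: p') e' q' f') => //; rewrite pE.
Qed.

Lemma basis_word_cons (a b : dedge E) t :
  composable a b -> basis_word (b :: t) -> basis_word [:: a, b & t].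
Proof.
move=> [rab ab] [_ [dp [p [q [w_pq last_pq]]]]].
do 2!split=> //; case: a ab rab => e ab rab.
- exists (e :: p), q; split; first by rewrite /= w_pq.
  case: p w_pq last_pq => [|e1 p] w_pq last_pq p' e' q' f'.
  + case: p' => [[<-]|? [|? ?] //] qE.
    move: w_pq; rewrite qE map_rcons rev_rcons => -[bE _]; subst b.
    by case: ab => [|]; [left | have [->|] := classic (e = f'); [right | left]].
  + case: p' => [|e2 p'] /= pE; first by case: pE.
    by case: pE => _ pE; exact: last_pq pE.
- case: b ab w_pq {dp rab} => f // _ w_pq.
  exists [::], (rcons q e); case: p w_pq {last_pq} => [|? ?] //= w_pq.
  by rewrite map_rcons rev_rcons w_pq; split=> // [[|? ?]].
Qed.

Lemma basis_wordE w : basis_word w <-> w <> [::] /\ composable_seq w.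
Proof.
elim: w => [|a [|b t] IH]; first by split; case.
- by split=> // _; apply: basis_word1.
- split=> [/basis_word_consK [ab /IH [_ ?]] // | [_ /= [ab ?]]].
  by apply: basis_word_cons => //; apply/IH.
Qed.

End BasisWords.

Section RepresentationGraphOfWord.
Variables (E : rfgraph) (x : nat -> dedge E).
Local Notation srcx := (@FE_src E x).

Definition FV_spine k : FV x := exist _ (k, [::]) (or_introl erefl).

Lemma FV_val_inj (a b : FV x) : sval a = sval b -> a = b.
Proof. exact: (eq_sig_hprop (fun _ => @proof_irrelevance _) a b). Qed.

Lemma FVpred_composable p : FVpred x p -> composable_seq (x p.1 :: p.2).
Proof.
case: p => k y; rewrite /FVpred /= => -[-> // | [/basis_wordE [_ y_seq] Xiy]].
by case: Xiy => y1 [ys [yE [/basis_wordE [_ [xy1 _]] _]]]; subst y; split.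
Qed.

Lemma phixE_last (a : FV x) : phixE a = last (x (sval a).1) (sval a).2.
Proof. by rewrite /phixE; case: (sval a).2. Qed.

Lemma src_idx_rcons k (z : seq (dedge E)) d : src_idx (k, rcons z d) = (k, z).
Proof. by rewrite /src_idx /= size_rcons -cats1 take_size_cat //; case: z. Qed.

Lemma iter_FE_src_spine n (a : FV x) k y : sval a = (k, y) ->
  sval (iter (n + size y) srcx a) = (k + n, [::]).
Proof.
rewrite iterD; elim: n => [|n IH] aE /=; last by rewrite IH // /src_idx addnS.
rewrite addn0; elim/last_ind: y a aE => [|z d IHy] a aE //.
by rewrite size_rcons iterSr; apply: IHy; rewrite /= aE src_idx_rcons.
Qed.

(* A child w_{i,d} of w_i never carries the label x_{i-1} of the spine edge
   from w_i, by the condition y_1 <> x_{i-1} in X_i. *)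
Lemma FE_src_label_inj (a b : FV x) : srcx a = srcx b -> phixE a = phixE b -> a = b.
Proof.
move=> /(f_equal sval) /=; rewrite !phixE_last => src_ab lab; apply: FV_val_inj.
case: a b src_ab lab => [[k y] Ha] [[k' y'] Hb] /=.
case/lastP: y Ha => [|z d] Ha; case/lastP: y' Hb => [|z' d'] Hb.
- by rewrite /src_idx /= => -[->].
- rewrite src_idx_rcons last_rcons /src_idx /= => -[kE zE] dE; subst k' z'.
  move: Hb; rewrite /FVpred /= => -[|[_ [y1 [ys [[<- _] [_ ne]]]]]] //.
  by case: (ne erefl (esym dE)).
- rewrite src_idx_rcons last_rcons /src_idx /= => -[kE zE] dE; subst k z.
  move: Ha; rewrite /FVpred /= => -[|[_ [y1 [ys [[<- _] [_ ne]]]]]] //.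
  by case: (ne erefl dE).
- by rewrite !src_idx_rcons !last_rcons => -[-> ->] ->.
Qed.

Lemma FVpred_rcons k y d : FVpred x (k, y) -> composable (last (x k) y) d ->
  ~ [/\ y = [::], 0 < k & d = x k.-1] -> FVpred x (k, rcons y d).
Proof.
move=> Hy yd not_spine; have y_seq := FVpred_composable Hy.
have ky_seq : composable_seq (x k :: rcons y d).
  by rewrite -rcons_cons; apply/composable_seq_rcons.
right; split.
  by apply/basis_wordE; split; [case: (y) | exact: composable_seq_behead ky_seq].
case: y Hy yd not_spine {y_seq ky_seq} => [|y1 ys] Hy yd not_spine /=.
- exists d, [::]; split=> //; split; first by apply/basis_wordE.
  by move=> k_gt0 dE; apply: not_spine.
- move: Hy; rewrite /FVpred /= => -[//|[_ [z1 [zs [[-> ->] [xz1 ne]]]]]].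
  by exists z1, (rcons zs d).
Qed.

End RepresentationGraphOfWord.

Section SourceFreeRepresentation.
Variables (E : rfgraph) (G : graph) (phV : gV G -> vert E) (phE : gE G -> dedge E).

Lemma onto_bij_iff w (T T' : dedge E -> Prop) :
  (forall d, T d <-> T' d) -> onto_bij phE w T -> onto_bij phE w T'.
Proof.
move=> TT' [inj [img onto]]; split=> //; split=> [f /img /TT' // | d /TT'].
exact: onto.
Qed.

Hypotheses (Hrep : is_ext_rep phV phE) (Hns : no_source G).

Lemma in_edge_spec w : exists fw, [/\ gr fw = w, forall f, gr f = w -> f = fw &
  onto_bij phE w (composable (phE fw))].
Proof.
have [phE_ends /(_ w) [[/Hns] // | [fw [fwE [fw_uniq Hfw]]]]] := Hrep.
exists fw; split=> //.
have phVw : phV w = rd (phE fw) by rewrite (proj2 (phE_ends fw)) fwE.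
move: Hfw phVw; case: (phE fw) => e /= Hfw phVw.
- have [spe | nspe] := classic (special e).
  + apply: onto_bij_iff (proj2 Hfw spe) => d.
    by rewrite composable_Real_special // phVw.
  + apply: onto_bij_iff (proj1 Hfw nspe) => d.
    by rewrite composable_Real_nonspecial // phVw.
- by apply: onto_bij_iff Hfw => d; rewrite composable_Ghost phVw.
Qed.

Definition in_edge w : gE G :=
  proj1_sig (constructive_indefinite_description _ (in_edge_spec w)).

Lemma in_edgeP w : [/\ gr (in_edge w) = w, forall f, gr f = w -> f = in_edge w &
  onto_bij phE w (composable (phE (in_edge w)))].
Proof. exact: proj2_sig (constructive_indefinite_description _ (in_edge_spec w)). Qed.

Lemma rng_in_edge w : gr (in_edge w) = w.
Proof. by case: (in_edgeP w). Qed.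

Lemma in_edge_rng f : in_edge (gr f) = f.
Proof. by case: (in_edgeP (gr f)) => _ uniq _; rewrite -(uniq f). Qed.

Lemma composable_out_edge f : composable (phE (in_edge (gs f))) (phE f).
Proof. by case: (in_edgeP (gs f)) => _ _ [_ [img _]]; apply: img. Qed.

Lemma out_edge_inj f1 f2 : gs f1 = gs f2 -> phE f1 = phE f2 -> f1 = f2.
Proof. by move=> sE; case: (in_edgeP (gs f2)) => _ _ [inj _]; apply: inj sE erefl. Qed.

Definition parent w := gs (in_edge w).

Definition child w d : gE G :=
  epsilon (inhabits (in_edge w)) (fun f => gs f = w /\ phE f = d).

Lemma childP w d :
  composable (phE (in_edge w)) d -> gs (child w d) = w /\ phE (child w d) = d.
Proof.
case: (in_edgeP w) => _ _ [_ [_ onto]] /onto [f fw fd].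
by apply: (epsilon_spec (inhabits (in_edge w)) (fun f => gs f = w /\ phE f = d)); exists f.
Qed.

Fixpoint walk v (y : seq (dedge E)) : gV G :=
  if y is d :: y' then walk (gr (child v d)) y' else v.

Lemma in_edge_walk v y : composable_seq (phE (in_edge v) :: y) ->
  phE (in_edge (walk v y)) = last (phE (in_edge v)) y.
Proof.
elim: y v => [|d y IH] v //= [vd y_seq].
have [_ child_d] := childP vd.
by rewrite IH in_edge_rng child_d.
Qed.

Lemma walk_rcons v y d : walk v (rcons y d) = gr (child (walk v y) d).
Proof. by elim: y v => [|d' y IH] v //=. Qed.

Hypotheses (Hac : acyclic G) (Hconn : connected G).
Variable w0 : gV G.

Definition ancestor n := iter n parent w0.

Definition ancestor_label k := phE (in_edge (ancestor k)).
Local Notation x := ancestor_label.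
Local Notation srcx := (@FE_src E x).

Lemma composable_ancestor_label n : composable (x n.+1) (x n).
Proof. exact: composable_out_edge. Qed.

Lemma ancestor_label_in_Xinf : in_Xinf x.
Proof.
case=> // n _; elim: n => [|n IH]; first exact: basis_word1.
rewrite mkseqS rev_rcons; rewrite mkseqS rev_rcons in IH *.
by apply: basis_word_cons => //; apply: composable_ancestor_label.
Qed.

Lemma ancestor_path n m : exists f fs,
  [/\ gpath f fs, gs f = ancestor (m + n).+1 & gr (last f fs) = ancestor m].
Proof.
elim: n => [|n [f [fs [f_fs fE lastE]]]].
  by exists (in_edge (ancestor m)), [::]; rewrite addn0 rng_in_edge.
exists (in_edge (ancestor (m + n).+1)), (f :: fs).
by rewrite /= rng_in_edge fE addnS.
Qed.

Lemma ancestor_inj : injective ancestor.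
Proof.
suff lt_neq i j : i < j -> ancestor i <> ancestor j.
  by move=> i j ij; case: (ltngtP i j) => // /lt_neq; [move/(_ ij) | move/(_ (esym ij))].
move=> ij ijE; have [f [fs [f_fs fE lastE]]] := ancestor_path (j - i.+1) i.
rewrite -addSn subnKC // in fE.
by apply: Hac; exists f, fs; rewrite lastE fE.
Qed.

Definition embed (a : FV x) : gV G := walk (ancestor (sval a).1) (sval a).2.

Lemma in_edge_embed a : phE (in_edge (embed a)) = phixE a.
Proof. by rewrite phixE_last in_edge_walk //; apply: FVpred_composable (svalP a). Qed.

Lemma parent_embed a : parent (embed a) = embed (srcx a).
Proof.
case: a => [[k y] Ha]; rewrite /embed /=.
case/lastP: y Ha => [|y d] Ha; first by [].
have /composable_seq_rcons [y_seq yd] := FVpred_composable Ha.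
rewrite -(in_edge_walk y_seq) in yd.
by rewrite src_idx_rcons /= walk_rcons /parent in_edge_rng (childP yd).1.
Qed.

Lemma iter_parent_embed n a : iter n parent (embed a) = embed (iter n srcx a).
Proof. by elim: n => [|n IH] //; rewrite !iterS IH parent_embed. Qed.

Lemma embed_inj_from_iter n a b :
  iter n srcx a = iter n srcx b -> embed a = embed b -> a = b.
Proof.
elim: n a b => [|n IH] a b //; rewrite !iterSr => src_ab ab.
apply: FE_src_label_inj; first by apply: IH => //; rewrite -!parent_embed ab.
by rewrite -!in_edge_embed ab.
Qed.

Lemma embed_inj : injective embed.
Proof.
move=> a b ab; case aE: (sval a) => [k y]; case bE: (sval b) => [k' y'].
have a_spine := iter_FE_src_spine (size y') aE.
have b_spine := iter_FE_src_spine (size y) bE; rewrite addnC in b_spine.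
apply: (@embed_inj_from_iter (size y' + size y)) => //; apply: FV_val_inj.
rewrite a_spine b_spine; congr (_, _); apply: ancestor_inj.
have := iter_parent_embed (size y' + size y) a.
by rewrite ab iter_parent_embed /embed a_spine b_spine.
Qed.

Lemma embed_out_edge a f : embed a = gs f -> exists b, embed b = gr f.
Proof.
case: a => [[k y] Ha]; rewrite /embed /= => af.
have a_f : composable (phE (in_edge (walk (ancestor k) y))) (phE f).
  by rewrite af; apply: composable_out_edge.
have [[yE k_gt0 fE] | not_spine] := classic [/\ y = [::], 0 < k & phE f = x k.-1].
  subst y; exists (FV_spine x k.-1) => /=.
  suff -> : f = in_edge (ancestor k.-1) by rewrite rng_in_edge.
  apply: out_edge_inj => //; rewrite -af /= -{1}(prednK k_gt0).
  by rewrite /ancestor iterS.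
have y_f := a_f; rewrite (in_edge_walk (FVpred_composable Ha)) in y_f.
exists (exist _ _ (FVpred_rcons Ha y_f not_spine)); rewrite /embed /= walk_rcons.
by have [childE child_f] := childP a_f; rewrite (out_edge_inj (f2 := f) _ child_f) // childE.
Qed.

Lemma embed_surj u : exists a, embed a = u.
Proof.
suff closed v v' : clos_refl_sym_trans _ (@gadj G) v v' ->
    (exists a, embed a = v) <-> (exists a, embed a = v').
  by apply/(closed _ _ (Hconn u w0)); exists (FV_spine x 0).
elim=> {v v'} [v v' [f [<- <-]] | v | v v' _ IH | v v' v'' _ IH _ IH'].
- split=> [[a /embed_out_edge] // | [a af]].
  by exists (srcx a); rewrite -parent_embed af /parent in_edge_rng.
- by [].
- by rewrite IH.
- by rewrite IH IH'.
Qed.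

Lemma phixV_embed a : phixV a = phV (embed a).
Proof. by rewrite /phixV -in_edge_embed (proj2 (proj1 Hrep _)) rng_in_edge. Qed.

End SourceFreeRepresentation.

Lemma inj_surj_bijective (A B : Type) (f : A -> B) :
  injective f -> (forall b, exists a, f a = b) -> bijective f.
Proof.
move=> f_inj f_surj.
pose g b := proj1_sig (constructive_indefinite_description _ (f_surj b)).
have fK b : f (g b) = b by exact: proj2_sig (constructive_indefinite_description _ (f_surj b)).
by exists g => // a; apply: f_inj; rewrite fK.
Qed.

Theorem proposition5p11 (E : rfgraph) (G : graph)
  (phV : gV G -> vert E) (phE : gE G -> dedge E) :
  is_ext_rep phV phE -> inhabited (gV G) -> acyclic G -> connected G -> no_source G ->
  exists x : nat -> dedge E, in_Xinf x /\
    @erg_iso E G phV phE (Fgraph x) (@phixV E x) (@phixE E x).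
Proof.
move=> Hrep [w0] Hac Hconn Hns.
exists (ancestor_label Hrep Hns w0); split; first exact: ancestor_label_in_Xinf.
have [g embedK gK] : bijective (@embed _ _ _ _ Hrep Hns w0).
  by apply: inj_surj_bijective; [apply: embed_inj | apply: embed_surj].
exists g, (fun f => g (gr f)); split; first by exists (@embed _ _ _ _ Hrep Hns w0).
split; first exists (fun a => in_edge Hrep Hns (embed a)).
- by move=> f /=; rewrite gK in_edge_rng.
- by move=> a /=; rewrite rng_in_edge embedK.
split.
  move=> f /=; apply: (embed_inj Hac); rewrite -parent_embed !gK.
  by rewrite /parent in_edge_rng.
do 2!split=> //; first by move=> v; rewrite phixV_embed gK.
by move=> f; rewrite -in_edge_embed gK in_edge_rng.
Qed.
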